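(* Let $G$ be a finite simple graph and $k\ge 1$ an integer. If $Z_k(G)=k$, then $Z_{k-1}(G)=k$.
   Context: Filling rule: if a filled vertex has exactly one unfilled neighbor (and any number of filled neighbors), that neighbor becomes filled; ''applying the filling rule in a subgraph $H$'' means applying it with neighborhoods taken in $H$. The $Z_q$-Game on $G$ ($q\ge 0$ an integer): initially all vertices are unfilled; a player repeatedly performs one of the following operations until all vertices are filled: (1) for one token, change any vertex from unfilled to filled; (2) at no cost, apply the filling rule in $G$; (3) if $F$ is the current set of filled vertices and $U_1,\dots,U_k$ are the vertex sets of the connected components of $G[V(G)\setminus F]$ with $k\ge q+1$, the player announces a selection of at least $q+1$ of the $U_i$ to an oracle (an adversary), the oracle returns a nonempty subset $\{U_{i_1},\dots,U_{i_\ell}\}$ of the selected components, and the player may at no cost apply the filling rule in $G[F\cup U_{i_1}\cup\cdots\cup U_{i_\ell}]$. $Z_q(G)$ is the minimum number of tokens with which the player can guarantee that all vertices become filled, regardless of the oracle's responses. *)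

From HB Require Import structures.
From mathcomp Require Import all_boot.
Set Implicit Arguments. Unset Strict Implicit. Unset Printing Implicit Defensive.

(* A finite simple graph: vertex type V (a finType), adjacency e : rel V,
   assumed symmetric and irreflexive in the theorem statement. *)

Section ZqGame.
Variables (V : finType) (e : rel V).

Definition force_in (W F F' : {set V}) : Prop :=
  exists u w, [/\ u \in F, u \in W, w \in W, w \notin F & e u w] /\
    (forall x, x \in W -> e u x -> x \notin F -> x = w) /\ F' = w |: F.

Inductive forces_in (W : {set V}) : {set V} -> {set V} -> Prop :=
| forces_refl (F : {set V}) : forces_in W F F
| forces_step (F F' F'' : {set V}) : force_in W F F' -> forces_in W F' F'' -> forces_in W F F''.

Definition unfilled_rel (F : {set V}) : rel V :=
  [rel x y | [&& e x y, x \notin F & y \notin F]].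

Definition comp (F : {set V}) (x : V) : {set V} :=
  [set y | connect (unfilled_rel F) x y].

Definition is_comp (F : {set V}) (U : {set V}) : Prop :=
  exists2 x, x \notin F & U = comp F x.

(* win q F t : starting from filled set F with t tokens available, the player
   can guarantee that all vertices become filled in the Z_q-game,
   whatever the oracle answers. *)
Inductive win (q : nat) : {set V} -> nat -> Prop :=
| win_done (F : {set V}) (t : nat) : F = setT -> win q F t
| win_token (F : {set V}) (t : nat) (v : V) : v \notin F -> win q (v |: F) t -> win q F t.+1
| win_force (F F' : {set V}) (t : nat) : force_in setT F F' -> win q F' t -> win q F t
| win_oracle (F : {set V}) (t : nat) (S : {set {set V}}) :
    (forall U, U \in S -> is_comp F U) ->
    q.+1 <= #|S| ->
    (forall Tr : {set {set V}}, Tr \subset S -> Tr != set0 ->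
       exists2 F', forces_in (F :|: \bigcup_(U in Tr) U) F F' & win q F' t) ->
    win q F t.

Definition Zq_is (q n : nat) : Prop :=
  win q set0 n /\ forall m, win q set0 m -> n <= m.

End ZqGame.

From HB Require Import structures.
From mathcomp Require Import all_boot.

Set Implicit Arguments. Unset Strict Implicit. Unset Printing Implicit Defensive.

(* Call a filled vertex active if it has an unfilled neighbour.  A token adds
   at most one active vertex and a forcing step adds none.  When the player
   offers more components than there are active vertices, the oracle can
   repeatedly discard the component holding the unique unfilled neighbour of
   some active vertex (removing that vertex from consideration) until no filled
   vertex has exactly one unfilled neighbour in the remaining components; it
   answers with those, and nothing can be forced.  So while tokens in hand plus
   active vertices stay at most q, oracle moves are useless in the Z_q-game,
   and a winning strategy wins the Z_q'-game for every q'.  Starting from the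
   empty set, this turns a Z_(k-1) win with fewer than k tokens into a Z_k win. *)

Section OracleFree.
Variables (V : finType) (e : rel V).

Definition unfilled_nbrs (F X : {set V}) (u : V) : {set V} :=
  [set x in X | (x \notin F) && e u x].

Definition stalled (F X : {set V}) : bool :=
  [forall u in F, #|unfilled_nbrs F X u| != 1].

Lemma stalled_no_force (F X F' : {set V}) :
  stalled F X -> ~ force_in e (F :|: X) F F'.
Proof.
move=> /forall_inP st [u [w [[uF _ wW wF euw] [w_uniq _]]]].
suff : unfilled_nbrs F X u = [set w] by move=> h; move: (st u uF); rewrite h cards1.
have wX : w \in X by move: wW; rewrite inE (negbTE wF).
apply/setP => x; rewrite !inE; apply/andP/eqP => [[xX /andP[xF eux]]|->].
  by apply: w_uniq; rewrite // inE xX orbT.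
by rewrite wX wF.
Qed.

Lemma stalled_forces_in (F X F' : {set V}) :
  stalled F X -> forces_in e (F :|: X) F F' -> F' = F.
Proof.
move=> st; move defW: (F :|: X) => W fs.
case: fs defW st => // F0 F1 F2 f01 _ defW /stalled_no_force no_f.
by rewrite -defW in f01; case: (no_f _ f01).
Qed.

Lemma stalled_subfamily (F A : {set V}) (S : {set {set V}}) :
  trivIset S -> #|A| < #|S| ->
  {in F, forall u, unfilled_nbrs F (cover S) u != set0 -> u \in A} ->
  exists2 T : {set {set V}}, T \subset S & (T != set0) && stalled F (cover T).
Proof.
have [n] := ubnP #|A|; elim: n => // n IHn in A S *; rewrite ltnS => leAn triS ltAS nbrsA.
have [st | ] := boolP (stalled F (cover S)).
  exists S => //; rewrite st andbT -card_gt0; exact: leq_ltn_trans ltAS.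
rewrite negb_forall_in => /exists_inP[u uF /negPn /cards1P[w uw]].
have : w \in unfilled_nbrs F (cover S) u by rewrite uw set11.
rewrite inE => /andP[/bigcupP[D DS wD] /andP[wF euw]].
have uA : u \in A by apply: nbrsA => //; rewrite uw; apply/set0Pn; exists w; rewrite set11.
have ltA'n : #|A :\ u| < n by rewrite (leq_trans _ leAn) // [in X in _ < X](cardsD1 u) uA.
have ltA'S' : #|A :\ u| < #|S :\ D|.
  by move: ltAS; rewrite (cardsD1 u) (cardsD1 D S) uA DS.
(* Without D, u has no unfilled neighbour left: w was its only one. *)
have nbrsA' : {in F, forall u', unfilled_nbrs F (cover (S :\ D)) u' != set0 -> u' \in A :\ u}.
  move=> u' u'F /set0Pn[x]; rewrite inE => /andP[/bigcupP[D' /setD1P[D'D D'S] xD'] nbr].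
  have xN : x \in unfilled_nbrs F (cover S) u'.
    by rewrite inE nbr andbT; apply/bigcupP; exists D'.
  rewrite !inE nbrsA ?andbT //; last by apply/set0Pn; exists x.
  apply: contra_neq D'D => eu'; subst u'.
  move: xN; rewrite uw inE => /eqP exw; subst x.
  by apply/eqP; apply: contraT => /(trivIsetP triS _ _ D'S DS) /disjointFr/(_ xD'); rewrite wD.
have [T TS ne_st] := IHn _ _ ltA'n (trivIsetS (subsetDl _ _) triS) ltA'S' nbrsA'.
by exists T => //; apply: subset_trans TS (subsetDl _ _).
Qed.

Definition active (F : {set V}) : {set V} :=
  [set u in F | [exists x, e u x && (x \notin F)]].

Lemma card_active_token (F : {set V}) (v : V) : #|active (v |: F)| <= #|active F|.+1.
Proof.
apply: leq_trans (_ : #|v |: active F| <= _); last by rewrite cardsU1 -add1n leq_add2r leq_b1.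
apply/subset_leq_card/subsetP => u; rewrite !inE => /andP[/orP[->//|uF] /existsP[x]].
rewrite !inE negb_or => /andP[eux /andP[_ xF]].
by apply/orP; right; rewrite uF; apply/existsP; exists x; rewrite eux.
Qed.

Lemma card_active_force (F F' : {set V}) :
  force_in e setT F F' -> #|active F'| <= #|active F|.
Proof.
case=> u [w [[uF _ _ wF euw] [w_uniq ->]]].
have uA : u \in active F by rewrite inE uF; apply/existsP; exists w; rewrite euw.
rewrite (cardsD1 u (active F)) uA add1n.
apply: leq_trans (_ : #|w |: (active F :\ u)| <= _); last by rewrite cardsU1 -add1n leq_add2r leq_b1.
apply/subset_leq_card/subsetP => y; rewrite !inE => /andP[/orP[->//|yF] /existsP[x]].
rewrite !inE negb_or => /andP[exy /andP[xw xF]].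
apply/orP; right; rewrite yF /=; apply/andP; split; last by apply/existsP; exists x; rewrite exy.
by apply: contra_neq xw => eyu; subst y; apply: w_uniq.
Qed.

Lemma active_set0 : active set0 = set0.
Proof. by apply/setP => u; rewrite !inE. Qed.

Hypothesis e_sym : symmetric e.

Lemma unfilled_rel_sym (F : {set V}) : symmetric (unfilled_rel e F).
Proof. by move=> a b; rewrite /unfilled_rel /= e_sym; congr (_ && _); apply: andbC. Qed.

Lemma comp_eq (F U1 U2 : {set V}) (x : V) :
  is_comp e F U1 -> is_comp e F U2 -> x \in U1 -> x \in U2 -> U1 = U2.
Proof.
have sym := sym_connect_sym (unfilled_rel_sym F).
case=> x1 _ -> [x2 _ ->]; rewrite !inE => c1 c2.
by apply/setP => y; rewrite !inE (same_connect sym c1) (same_connect sym c2).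
Qed.

Lemma comps_trivIset (F : {set V}) (S : {set {set V}}) :
  {in S, forall U, is_comp e F U} -> trivIset S.
Proof.
move=> compS; apply/trivIsetP => U1 U2 U1S U2S; apply: contraR.
rewrite -setI_eq0 => /set0Pn[x]; rewrite inE => /andP[xU1 xU2].
by rewrite (comp_eq (compS _ U1S) (compS _ U2S) xU1 xU2) eqxx.
Qed.

Lemma win_any_level (q q' : nat) :
  forall F t, win e q F t -> t + #|active F| <= q -> win e q' F t.
Proof.
(* The induction principle of [win] has no hypothesis for the subgames hidden
   under the oracle's [exists2], hence the explicit fixpoint. *)
fix IH 3 => F t [].
- by move=> F0 t0 full _; apply: win_done.
- move=> F0 t0 v vF w le_q; apply: (win_token vF); apply: (IH _ _ w).
  by apply: leq_trans le_q; rewrite addSn -addnS leq_add2l card_active_token.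
- move=> F0 F1 t0 f01 w le_q; apply: (win_force f01); apply: (IH _ _ w).
  by apply: leq_trans le_q; rewrite leq_add2l card_active_force.
- move=> F0 t0 S compS ltqS ans le_q.
  have ltAS : #|active F0| < #|S|.
    by apply: leq_trans ltqS; rewrite ltnS (leq_trans _ le_q) ?leq_addl.
  have nbrsA : {in F0, forall u, unfilled_nbrs F0 (cover S) u != set0 -> u \in active F0}.
    move=> u uF /set0Pn[x]; rewrite inE => /and3P[_ xF eux].
    by rewrite inE uF; apply/existsP; exists x; rewrite eux.
  have [T TS /andP[neT stT]] := stalled_subfamily (comps_trivIset compS) ltAS nbrsA.
  case: (ans T TS neT) => F' /(stalled_forces_in stT) -> w.
  exact: IH _ _ w le_q.
Qed.

End OracleFree.

Theorem corollary2p3 (V : finType) (e : rel V)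
  (e_sym : symmetric e) (e_irr : irreflexive e) (k : nat) (hk : 1 <= k) :
  Zq_is e k k -> Zq_is e k.-1 k.
Proof.
have active0 : #|active e set0| = 0 by rewrite active_set0 cards0.
case=> win_k min_k; split.
  by apply: (win_any_level e_sym _ win_k); rewrite active0 addn0.
move=> m win_m; rewrite leqNgt; apply/negP => lt_mk.
have /min_k : win e k set0 m.
  by apply: (win_any_level e_sym _ win_m); rewrite active0 addn0 -ltnS (ltn_predK lt_mk).
by rewrite leqNgt lt_mk.
Qed.
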